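(* Let $\Sigma$ be a finite nonempty set of $d\times d$ real matrices with nonnegative entries. There exists a constant $K>0$ such that the following holds. For each $i\in\{1,\dots,d\}$ let $m_i$ be any positive integer with $\|\Sigma^{m_i}\|_{i,i}\ne 0$, or $m_i=1$ if no such positive integer exists. Then \[ \max_{i}\sqrt[m_i]{\|\Sigma^{m_i}\|_{i,i}}\;\le\;\rho(\Sigma)\;\le\;\max_i\sqrt[m_i]{K\,\|\Sigma^{m_i}\|_{i,i}}. \]
   Context: For $n\ge1$, $\|\Sigma^n\|_{i,j}=\max_{A_1,\dots,A_n\in\Sigma}(A_1\cdots A_n)_{i,j}$. The joint spectral radius is $\rho(\Sigma)=\lim_{n\to\infty}\sqrt[n]{\max_{A_1,\dots,A_n\in\Sigma}\|A_1\cdots A_n\|}$ for any matrix norm (the limit exists and is independent of the norm). The constant $K$ depends only on $\Sigma$, not on the choice of the $m_i$. *)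

From HB Require Import structures.
From mathcomp Require Import all_boot all_order all_algebra.
From mathcomp Require Import all_classical all_reals all_analysis.
Set Implicit Arguments. Unset Strict Implicit. Unset Printing Implicit Defensive.
Import Order.TTheory GRing.Theory Num.Theory.
Local Open Scope ring_scope.

Definition mxprod (R : realType) (d : nat) (s : seq 'M[R]_d) : 'M[R]_d :=
  foldr (fun A B => A *m B) 1%:M s.

Definition word_prod (R : realType) (d : nat) (Sigma : seq 'M[R]_d) (n : nat)
  (t : {ffun 'I_n -> 'I_(size Sigma)}) : 'M[R]_d :=
  mxprod [seq Sigma`_(t l) | l <- enum 'I_n].

(* ||Sigma^n||_{i,j} = max over all products of n matrices of Sigma of the
   (i,j) entry.  (Entries are nonnegative in the theorem, so starting the
   max at 0 is harmless.) *)
Definition sigma_entry (R : realType) (d : nat) (Sigma : seq 'M[R]_d) (n : nat)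
  (i j : 'I_d) : R :=
  \big[Num.max/0]_(t : {ffun 'I_n -> 'I_(size Sigma)}) (@word_prod R d Sigma n t i j).

Definition mx_maxnorm (R : realType) (d : nat) (A : 'M[R]_d) : R :=
  \big[Num.max/0]_(i < d) \big[Num.max/0]_(j < d) `|A i j|.

Definition sigma_norm (R : realType) (d : nat) (Sigma : seq 'M[R]_d) (n : nat) : R :=
  \big[Num.max/0]_(t : {ffun 'I_n -> 'I_(size Sigma)}) mx_maxnorm (@word_prod R d Sigma n t).

Definition jsr (R : realType) (d : nat) (Sigma : seq 'M[R]_d) : R :=
  limn (fun n : nat => sigma_norm Sigma n.+1 `^ (n.+1%:R)^-1).

Definition nonneg_mx (R : realType) (d : nat) (A : 'M[R]_d) : Prop :=
  forall i j, 0 <= A i j.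

From HB Require Import structures.
From mathcomp Require Import all_boot all_order all_algebra.
From mathcomp Require Import all_classical all_reals all_analysis.
From mathcomp Require Import zify ring.
Import Order.TTheory GRing.Theory Num.Theory.
Local Open Scope ring_scope.
Set Implicit Arguments. Unset Strict Implicit. Unset Printing Implicit Defensive.

(* Write E n i j for ||Sigma^n||_{i,j} and rho_i for sup_n (E n i i)^(1/n).
   Concatenating words makes n |-> E n i i supermultiplicative, so
   (E n i i)^(1/n) <= rho_i; the lower bound follows once rho(Sigma) is shown
   to be max_i rho_i.  For that equality: on the communicating class of i the
   largest entries are submultiplicative up to a factor d, whence
   rho_i^n <= d ||Sigma^n||; conversely, splitting walks at their first visit
   to a vertex and inducting on the set of allowed vertices bounds every entry
   by C t^n for each t > max_i rho_i.
   For the upper bound take i with rho_i = rho(Sigma).  Every vertex of its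
   class is reachable from i and back in a bounded number of steps, so
   u n := E n i i satisfies c0 rho^n <= u x for some x in [n, n + T]; with
   supermultiplicativity and a residue argument modulo a return time this
   gives c rho^n <= u n whenever u n > 0, and K := 1/c works. *)

Section RealBounds.
Variable R : realType.
Implicit Types x y : R.

Lemma expr_powR_invn x n : 0 <= x -> (0 < n)%N -> (x `^ n%:R^-1) ^+ n = x.
Proof.
move=> x0 n0; rewrite -powR_mulrn ?powR_ge0 // -powRrM mulVf ?pnatr_eq0 -?lt0n //.
exact: powRr1.
Qed.

Lemma powR_invn_expr x n : 0 <= x -> (0 < n)%N -> (x ^+ n) `^ n%:R^-1 = x.
Proof.
move=> x0 n0; rewrite -powR_mulrn // -powRrM mulfV ?pnatr_eq0 -?lt0n //.
exact: powRr1.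
Qed.

Lemma ler_powR_nneg x y r : 0 <= r -> 0 <= x -> x <= y -> x `^ r <= y `^ r.
Proof.
move=> r0 x0 xy; apply: ge0_ler_powR; rewrite ?nnegrE //.
exact: le_trans xy.
Qed.

Lemma ler_powR_invn x y n k : 0 <= x -> 0 <= y -> (0 < n)%N -> (0 < k)%N ->
  x ^+ n <= y ^+ k -> x `^ k%:R^-1 <= y `^ n%:R^-1.
Proof.
move=> x0 y0 n0 k0 xy.
have n0' : n%:R != 0 :> R by rewrite pnatr_eq0 -lt0n.
have k0' : k%:R != 0 :> R by rewrite pnatr_eq0 -lt0n.
have -> : k%:R^-1 = n%:R * (n * k)%:R^-1 :> R.
  by rewrite natrM invfM mulrA mulfV ?mul1r.
have -> : n%:R^-1 = k%:R * (n * k)%:R^-1 :> R.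
  by rewrite natrM invfM mulrCA mulfV ?mulr1.
by rewrite !powRrM !powR_mulrn //; apply: ler_powR_nneg; rewrite ?exprn_ge0.
Qed.

Lemma finite_pos_lower_bound (I : finType) (f : I -> R) :
  (forall a, 0 < f a) -> exists2 c, 0 < c & forall a, c <= f a.
Proof.
move=> f_gt0; exists (\big[Num.min/1]_a f a); last by move=> a; exact: bigmin_le.
by apply/bigmin_gtP; split => // a _; exact: f_gt0.
Qed.

Lemma nat_pos_lower_bound (f : nat -> R) (B : nat) :
  exists2 c, 0 < c & forall r, (r < B)%N -> 0 < f r -> c <= f r.
Proof.
pose g (r : 'I_B) := if 0 < f r then f r else 1.
have [|c c0 cg] := @finite_pos_lower_bound _ g.
  by move=> r; rewrite /g; case: ifP.
by exists c => // r rB fr; have := cg (Ordinal rB); rewrite /g /= fr.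
Qed.

Lemma sum_geometric_le x y n : 0 <= x < y ->
  \sum_(i < n) x ^+ (n.-1 - i) * y ^+ i <= y ^+ n / (y - x).
Proof.
move=> /andP [x0 xy]; have yx : 0 < y - x by rewrite subr_gt0.
have -> : \sum_(i < n) x ^+ (n.-1 - i) * y ^+ i = (y ^+ n - x ^+ n) / (y - x).
  apply: (@mulIf _ (y - x)); first by rewrite gt_eqF.
  by rewrite mulfVK ?gt_eqF // mulrC -[RHS]opprB subrXX -mulNr opprB.
by rewrite ler_pM2r ?invr_gt0 // gerBl exprn_ge0.
Qed.

End RealBounds.

Section Words.
Variables (R : realType) (d : nat) (Sigma : seq 'M[R]_d).
Hypothesis Sigma_neq0 : Sigma != [::].
Hypothesis Sigma_ge0 : forall A, A \in Sigma -> nonneg_mx A.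
Local Notation E := (sigma_entry Sigma).
Implicit Types ws : seq 'M[R]_d.

Lemma mxprod_cat ws1 ws2 : mxprod (ws1 ++ ws2) = mxprod ws1 *m mxprod ws2.
Proof.
elim: ws1 => [|A ws1 IH] /=; first by rewrite /mxprod /= mul1mx.
by rewrite /mxprod /= -/(mxprod _) IH mulmxA.
Qed.

Lemma mxprod_ge0 ws : {subset ws <= Sigma} -> nonneg_mx (mxprod ws).
Proof.
elim: ws => [_ i j|A ws IH wsS i j]; first by rewrite mxE ler0n.
rewrite mxE; apply: sumr_ge0 => k _; apply: mulr_ge0.
  by apply: Sigma_ge0; apply: wsS; exact: mem_head.
by apply: IH => B BS; apply: wsS; rewrite inE BS orbT.
Qed.

Let word_of n (t : {ffun 'I_n -> 'I_(size Sigma)}) :=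
  [seq Sigma`_(t l) | l <- enum 'I_n].

Let word_of_subset n t : {subset @word_of n t <= Sigma}.
Proof. by move=> A /mapP [l _ ->]; exact: mem_nth. Qed.

Let size_word_of n t : size (@word_of n t) = n.
Proof. by rewrite size_map size_enum_ord. Qed.

Lemma word_prod_ge0 n (t : {ffun 'I_n -> 'I_(size Sigma)}) : nonneg_mx (word_prod t).
Proof. exact/mxprod_ge0/word_of_subset. Qed.

Lemma word_prod_le_sigma_entry n (t : {ffun 'I_n -> 'I_(size Sigma)}) i j :
  word_prod t i j <= E n i j.
Proof. exact: (le_bigmax _ (fun t => word_prod t i j)). Qed.

Lemma size_Sigma_gt0 : (0 < size Sigma)%N.
Proof. by case: Sigma Sigma_neq0. Qed.

Lemma mxprod_le_sigma_entry ws i j :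
  {subset ws <= Sigma} -> mxprod ws i j <= E (size ws) i j.
Proof.
move=> wsS.
pose t := [ffun l : 'I_(size ws) =>
  insubd (Ordinal size_Sigma_gt0) (index ws`_l Sigma) : 'I_(size Sigma)].
suff ws_eq : word_of t = ws by rewrite -{1}ws_eq; exact: word_prod_le_sigma_entry.
rewrite -[RHS](mkseq_nth 0) /mkseq -val_enum_ord -map_comp.
apply: eq_map => l /=; have lS : ws`_l \in Sigma by apply/wsS/mem_nth.
by rewrite ffunE val_insubd index_mem lS nth_index.
Qed.

Lemma sigma_entry_attained n i j :
  exists ws, [/\ {subset ws <= Sigma}, size ws = n & E n i j = mxprod ws i j].
Proof.
pose t0 : {ffun 'I_n -> 'I_(size Sigma)} := [ffun=> Ordinal size_Sigma_gt0].
rewrite /sigma_entry.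
have [t _ ->] := @eq_bigmax _ _ _ 0 t0 xpredT (fun t => word_prod t i j) isT
  (fun t _ => word_prod_ge0 t i j).
by exists (word_of t); split; rewrite ?size_word_of.
Qed.

Lemma sigma_entry_ge0 n i j : 0 <= E n i j.
Proof.
by have [ws [wsS _ ->]] := sigma_entry_attained n i j; exact: mxprod_ge0.
Qed.

Lemma sigma_entry0 i j : E 0 i j = (i == j)%:R.
Proof.
have [ws [_ /size0nil -> ->]] := sigma_entry_attained 0 i j.
by rewrite mxE.
Qed.

Lemma sigma_entry_mul a b j k l : E a j k * E b k l <= E (a + b) j l.
Proof.
have [ws1 [ws1S <- ->]] := sigma_entry_attained a j k.
have [ws2 [ws2S <- ->]] := sigma_entry_attained b k l.
have wsS : {subset ws1 ++ ws2 <= Sigma}.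
  by move=> A; rewrite mem_cat => /orP [/ws1S | /ws2S].
rewrite -size_cat; apply: le_trans (mxprod_le_sigma_entry j l wsS).
rewrite mxprod_cat mxE.
rewrite (bigD1 k) //= lerDl; apply: sumr_ge0 => k' _.
by apply: mulr_ge0; exact: mxprod_ge0.
Qed.

Lemma sigma_entry_add_le a b j l : E (a + b) j l <= \sum_k E a j k * E b k l.
Proof.
have [ws [wsS size_ws ->]] := sigma_entry_attained (a + b) j l.
rewrite -(cat_take_drop a ws) mxprod_cat mxE.
have takeS : {subset take a ws <= Sigma} by move=> A /mem_take /wsS.
have dropS : {subset drop a ws <= Sigma} by move=> A /mem_drop /wsS.
have size_take_ws : size (take a ws) = a.
  by rewrite size_take size_ws; case: ltnP => //; lia.
have size_drop_ws : size (drop a ws) = b by rewrite size_drop size_ws addKn.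
apply: ler_sum => k _; apply: ler_pM; rewrite ?mxprod_ge0 //.
  by rewrite -[in E a]size_take_ws; exact: mxprod_le_sigma_entry.
by rewrite -[in E b]size_drop_ws; exact: mxprod_le_sigma_entry.
Qed.

Lemma sigma_entry_expr k n i : E k i i ^+ n <= E (k * n) i i.
Proof.
elim: n => [|n IH]; first by rewrite expr0 muln0 sigma_entry0 eqxx.
rewrite exprS mulnS; apply: le_trans (sigma_entry_mul _ _ _ i _).
by apply: ler_wpM2l => //; exact: sigma_entry_ge0.
Qed.

Definition entry_bound := 1 + \sum_(A <- Sigma) \sum_i \sum_j A i j.

Lemma entry_bound_ge1 : 1 <= entry_bound.
Proof.
rewrite lerDl big_seq; apply: sumr_ge0 => A AS.
by apply: sumr_ge0 => i _; apply: sumr_ge0 => j _; exact: Sigma_ge0.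
Qed.

Lemma entry_bound_ge0 : 0 <= entry_bound.
Proof. exact: le_trans entry_bound_ge1. Qed.

Lemma rowsum_le_entry_bound A i : A \in Sigma -> \sum_j A i j <= entry_bound.
Proof.
move=> AS; have A_ge0 := Sigma_ge0 AS.
rewrite /entry_bound (big_rem A AS) /= addrCA.
apply: le_trans (_ : \sum_i' \sum_j A i' j <= _).
  rewrite [leRHS](bigD1 i) //= lerDl.
  by apply: sumr_ge0 => i' _; apply: sumr_ge0.
rewrite lerDl addr_ge0 // big_seq; apply: sumr_ge0 => B /mem_rem BS.
by apply: sumr_ge0 => i' _; apply: sumr_ge0 => j _; exact: Sigma_ge0.
Qed.

Lemma mxprod_le_entry_bound ws j l :
  {subset ws <= Sigma} -> mxprod ws j l <= entry_bound ^+ size ws.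
Proof.
elim: ws j l => [|A ws IH] j l wsS; first by rewrite expr0 mxE lern1 leq_b1.
have AS : A \in Sigma by apply: wsS; exact: mem_head.
have {}wsS : {subset ws <= Sigma} by move=> B BS; apply: wsS; rewrite inE BS orbT.
rewrite mxE exprS.
apply: le_trans (_ : \sum_k A j k * entry_bound ^+ size ws <= _).
  by apply: ler_sum => k _; apply: ler_wpM2l; [exact: Sigma_ge0 | exact: IH].
by rewrite -mulr_suml ler_wpM2r ?exprn_ge0 ?entry_bound_ge0 ?rowsum_le_entry_bound.
Qed.

Lemma sigma_entry_le_expr n j l : E n j l <= entry_bound ^+ n.
Proof.
have [ws [wsS <- ->]] := sigma_entry_attained n j l.
exact: mxprod_le_entry_bound.
Qed.

End Words.

Section DiagonalRate.
Variables (R : realType) (d : nat) (Sigma : seq 'M[R]_d).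
Hypothesis Sigma_neq0 : Sigma != [::].
Hypothesis Sigma_ge0 : forall A, A \in Sigma -> nonneg_mx A.
Local Notation E := (sigma_entry Sigma).

Let E_ge0 n i j : 0 <= E n i j := sigma_entry_ge0 Sigma_neq0 Sigma_ge0 n i j.
Let E_mul a b j k l : E a j k * E b k l <= E (a + b) j l :=
  sigma_entry_mul Sigma_neq0 Sigma_ge0 a b j k l.

Definition diag_rate (i : 'I_d) : R :=
  sup [set E n i i `^ n%:R^-1 | n in [set n : nat | (0 < n)%N]]%classic.

Lemma diag_rate_ub i n : (0 < n)%N -> E n i i `^ n%:R^-1 <= diag_rate i.
Proof.
move=> n0; apply: ub_le_sup; last by exists n.
exists (entry_bound Sigma) => _ [k /= k0 <-].
rewrite -(@powR_invn_expr _ (entry_bound Sigma) k) ?entry_bound_ge0 //.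
by apply: ler_powR_nneg => //; exact: sigma_entry_le_expr.
Qed.

Lemma diag_rate_le i x :
  (forall n, (0 < n)%N -> E n i i `^ n%:R^-1 <= x) -> diag_rate i <= x.
Proof.
move=> ub; apply: ge_sup; first by exists (E 1 i i `^ 1%:R^-1), 1%N.
by move=> _ [n /= n0 <-]; exact: ub.
Qed.

Lemma diag_rate_ge0 i : 0 <= diag_rate i.
Proof. exact: le_trans (powR_ge0 _ _) (diag_rate_ub i (ltn0Sn 0)). Qed.

Lemma sigma_entry_diag_le i n : E n i i <= diag_rate i ^+ n.
Proof.
case: n => [|n]; first by rewrite sigma_entry0 // eqxx expr0.
rewrite -(@expr_powR_invn _ (E n.+1 i i) n.+1) //.
by apply: lerXn2r; rewrite ?nnegrE ?powR_ge0 ?diag_rate_ge0 ?diag_rate_ub.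
Qed.

Lemma diag_rate_gt0_entry_neq0 i : 0 < diag_rate i -> exists2 n, (0 < n)%N & E n i i != 0.
Proof.
move=> rate_gt0; case: (pselect (exists2 n, (0 < n)%N & E n i i != 0)) => // no_n.
suff : diag_rate i <= 0 by rewrite leNgt rate_gt0.
apply: diag_rate_le => n n0.
have -> : E n i i = 0 by apply/eqP; apply: contra_notT no_n => ?; exists n.
by rewrite powR0 // invr_neq0 // pnatr_eq0 -lt0n.
Qed.

Variable i : 'I_d.

Definition communicating_class : {set 'I_d} :=
  [set k | `[< exists a b, 0 < E a i k /\ 0 < E b k i >]].
Local Notation C := communicating_class.

Lemma mem_communicating_class k :
  reflect (exists a b, 0 < E a i k /\ 0 < E b k i) (k \in C).
Proof. by rewrite inE; apply: asboolP. Qed.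

Lemma communicating_class_self : i \in C.
Proof.
by apply/mem_communicating_class; exists 0%N, 0%N; rewrite sigma_entry0 // eqxx ltr01.
Qed.

Lemma communicating_class_path a b j k l : j \in C -> l \in C ->
  0 < E a j k * E b k l -> k \in C.
Proof.
move=> /mem_communicating_class [a1 [b1 [ij ji]]].
move=> /mem_communicating_class [a2 [b2 [il li]]].
move=> jkl.
have jk : 0 < E a j k.
  by rewrite lt_def E_ge0 andbT; apply: contraTneq jkl => ->; rewrite mul0r ltxx.
have kl : 0 < E b k l.
  by rewrite lt_def E_ge0 andbT; apply: contraTneq jkl => ->; rewrite mulr0 ltxx.
apply/mem_communicating_class; exists (a1 + a)%N, (b + b2)%N; split.
  by apply: lt_le_trans (E_mul _ _ _ j _); exact: mulr_gt0.
by apply: lt_le_trans (E_mul _ _ _ l _); exact: mulr_gt0.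
Qed.

Definition class_max n :=
  \big[Num.max/0]_(p : 'I_d * 'I_d | (p.1 \in C) && (p.2 \in C)) E n p.1 p.2.

Lemma class_max_ge0 n : 0 <= class_max n.
Proof. exact: bigmax_ge_id. Qed.

Lemma sigma_entry_le_class_max n j l : j \in C -> l \in C -> E n j l <= class_max n.
Proof.
move=> jC lC.
have := @le_bigmax_cond _ _ _ 0 (j, l)
  (fun p : 'I_d * 'I_d => (p.1 \in C) && (p.2 \in C)) (fun p => E n p.1 p.2).
by apply; rewrite /= jC lC.
Qed.

Lemma dim_gt0 : (0 < d)%N.
Proof. exact: leq_ltn_trans (leq0n i) (ltn_ord i). Qed.

Lemma class_max_add a b : class_max (a + b) <= d%:R * (class_max a * class_max b).
Proof.
apply: bigmax_le => [|[j l]]; first by rewrite mulr_ge0 ?mulr_ge0 ?class_max_ge0.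
move=> /andP [/= jC lC].
apply: le_trans (sigma_entry_add_le Sigma_neq0 Sigma_ge0 a b j l) _.
rewrite mulr_natl -[d in leRHS]card_ord -sumr_const.
apply: ler_sum => k _.
have [/(communicating_class_path jC lC) kC|] := ltP 0 (E a j k * E b k l).
  by apply: ler_pM; rewrite ?E_ge0 ?sigma_entry_le_class_max.
by move/le_trans; apply; rewrite mulr_ge0 ?class_max_ge0.
Qed.

Lemma class_max_mul n k :
  d%:R * class_max (n * k.+1) <= (d%:R * class_max n) ^+ k.+1.
Proof.
have dc_ge0 m : 0 <= d%:R * class_max m by rewrite mulr_ge0 ?class_max_ge0.
elim: k => [|k IH]; first by rewrite muln1 expr1.
rewrite mulnS exprS.
apply: le_trans (_ : d%:R * (d%:R * (class_max n * class_max (n * k.+1))) <= _).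
  by apply: ler_wpM2l; rewrite ?class_max_add.
have -> : d%:R * (d%:R * (class_max n * class_max (n * k.+1))) =
  d%:R * class_max n * (d%:R * class_max (n * k.+1)) by ring.
exact: ler_wpM2l.
Qed.

Lemma diag_rate_expr_le n : diag_rate i ^+ n <= d%:R * class_max n.
Proof.
have d_ge1 : 1 <= d%:R :> R by rewrite ler1n dim_gt0.
have dc_ge0 : 0 <= d%:R * class_max n by rewrite mulr_ge0 ?class_max_ge0.
have cm_le m : class_max m <= d%:R * class_max m by rewrite ler_peMl ?class_max_ge0.
case: n => [|n] in dc_ge0 *.
  rewrite expr0; apply: le_trans (cm_le 0%N).
  have := sigma_entry_le_class_max 0 communicating_class_self communicating_class_self.
  by rewrite sigma_entry0 // eqxx.
rewrite -(expr_powR_invn dc_ge0 (ltn0Sn n)).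
apply: lerXn2r; rewrite ?nnegrE ?powR_ge0 ?diag_rate_ge0 //.
apply: diag_rate_le => k k0; apply: ler_powR_invn => //.
apply: le_trans (sigma_entry_expr Sigma_neq0 Sigma_ge0 k n.+1 i) _.
have iC := communicating_class_self.
apply: le_trans (sigma_entry_le_class_max _ iC iC) _.
apply: le_trans (cm_le _) _.
by case: k k0 => // k _; rewrite mulnC; exact: class_max_mul.
Qed.

(* Any entry inside the class of i is routed back to i at bounded cost. *)
Lemma diag_rate_recurrent : exists T, exists2 c, 0 < c &
  forall n, exists x, (n <= x <= n + T)%N /\ c * diag_rate i ^+ n <= E x i i.
Proof.
have witness k : exists ab : nat * nat, k \in C -> 0 < E ab.1 i k /\ 0 < E ab.2 k i.
  have [/mem_communicating_class [a [b ab]]|_] := boolP (k \in C).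
    by exists (a, b).
  by exists (0, 0)%N.
have [ab ab_pos] := choice witness.
pose g (p : 'I_d * 'I_d) := if (p.1 \in C) && (p.2 \in C)
  then E (ab p.1).1 i p.1 * E (ab p.2).2 p.2 i else 1.
have [c c0 cg] : exists2 c, 0 < c & forall p, c <= g p.
  apply: finite_pos_lower_bound => -[j l]; rewrite /g /=.
  case: ifP => [/andP [jC lC]|_] //.
  by apply: mulr_gt0; [case: (ab_pos j jC) | case: (ab_pos l lC)].
have d_gt0 : 0 < d%:R :> R by rewrite ltr0n dim_gt0.
pose Ta := (\max_k (ab k).1)%N; pose Tb := (\max_k (ab k).2)%N.
exists (Ta + Tb)%N, (c / d%:R); first exact: divr_gt0.
move=> n.
have [[j l] /andP [/= jC lC] cm_eq] := @eq_bigmax _ _ _ 0 (i, i)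
  (fun p : 'I_d * 'I_d => (p.1 \in C) && (p.2 \in C)) (fun p => E n p.1 p.2)
  (introT andP (conj communicating_class_self communicating_class_self))
  (fun p _ => E_ge0 _ _ _).
exists ((ab j).1 + n + (ab l).2)%N; split.
  have aj : ((ab j).1 <= Ta)%N by exact: leq_bigmax.
  have bl : ((ab l).2 <= Tb)%N by exact: leq_bigmax.
  lia.
apply: le_trans (_ : c * class_max n <= _).
  rewrite -mulrA; apply: ler_wpM2l; first exact: ltW.
  by rewrite ler_pdivrMl // diag_rate_expr_le.
rewrite /class_max cm_eq /=.
apply: le_trans (_ : g (j, l) * E n j l <= _); first exact/ler_wpM2r/cg.
rewrite /g /= jC lC /= -addnA; apply: le_trans (E_mul _ _ _ j _).
by rewrite mulrAC -mulrA; apply: ler_wpM2l; rewrite ?E_ge0 ?E_mul.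
Qed.

End DiagonalRate.

Section SupermultiplicativeLowerBound.
Variables (R : realType) (u : nat -> R) (L c0 : R) (T : nat).
Hypotheses (L_gt0 : 0 < L) (c0_gt0 : 0 < c0) (u0 : u 0%N = 1).
Hypothesis u_supermul : forall a b, u a * u b <= u (a + b)%N.
Hypothesis u_recurrent :
  forall n, exists x, (n <= x <= n + T)%N /\ c0 * L ^+ n <= u x.

Lemma supermul_gt0_add a b : 0 < u a -> 0 < u b -> 0 < u (a + b)%N.
Proof. by move=> ua ub; apply: lt_le_trans (u_supermul a b); exact: mulr_gt0. Qed.

Lemma supermul_gt0_mul a k : 0 < u a -> 0 < u (a * k)%N.
Proof.
move=> ua; elim: k => [|k IH]; first by rewrite muln0 u0.
by rewrite mulnS; exact: supermul_gt0_add.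
Qed.

Lemma supermul_gt0_periodic q : (0 < q)%N -> 0 < u q -> exists R0,
  forall y z, 0 < u y -> (R0 <= z)%N -> z = y %[mod q] -> 0 < u z.
Proof.
move=> q_gt0 uq.
have witness (r : 'I_q) : exists y, (exists z, 0 < u z /\ (z %% q)%N = r) ->
    0 < u y /\ (y %% q)%N = r.
  case: (pselect (exists z, 0 < u z /\ (z %% q)%N = r)) => [[z hz]|no_z].
    by exists z.
  by exists 0%N => /no_z.
have [g g_spec] := choice witness.
exists (\max_r g r)%N => y z uy R0z zy.
have r_lt : (y %% q < q)%N by rewrite ltn_pmod.
have [ug gmod] := g_spec (Ordinal r_lt) (ex_intro _ y (conj uy erefl)).
have g_le : (g (Ordinal r_lt) <= z)%N by apply: leq_trans R0z; exact: leq_bigmax.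
have /dvdnP [k zk] : (q %| z - g (Ordinal r_lt))%N by rewrite -eqn_mod_dvd // gmod zy.
have -> : z = (g (Ordinal r_lt) + k * q)%N by rewrite -zk subnKC.
by apply: supermul_gt0_add => //; rewrite mulnC; exact: supermul_gt0_mul.
Qed.

Lemma supermul_split : exists B, forall m, 0 < u m -> (B <= m)%N ->
  exists x, [/\ (x <= m)%N, c0 * L ^+ (m - B) <= u x, 0 < u (m - x)%N & (m - x <= B)%N].
Proof.
have [q [/andP [q_gt0 _] uq_big]] := u_recurrent 1.
have uq : 0 < u q by apply: lt_le_trans uq_big; rewrite expr1 mulr_gt0.
have [R0 periodic] := supermul_gt0_periodic q_gt0 uq.
exists (R0 + T)%N => m um Bm.
have [x [/andP [x_ge x_le] ux_big]] := u_recurrent (m - (R0 + T)).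
have ux : 0 < u x by apply: lt_le_trans ux_big; rewrite mulr_gt0 ?exprn_gt0.
have [xm R0_le_mx mx_le_B] : [/\ x <= m, R0 <= m - x & m - x <= R0 + T]%N.
  by move: Bm x_ge x_le; clear -R0 T m x => *; split; lia.
exists x; split => //; apply: (periodic (m - x + x * q)%N) => //.
  have -> : (m - x + x * q = m + x * q.-1)%N.
    by rewrite -{1}(prednK q_gt0) mulnS addnA subnK.
  by apply: supermul_gt0_add => //; exact: supermul_gt0_mul.
by rewrite [in RHS]addnC modnMDl.
Qed.

Lemma supermul_lower_bound :
  exists2 c, 0 < c & forall m, 0 < u m -> c * L ^+ m <= u m.
Proof.
have [B split_large] := supermul_split.
have [c1 c1_gt0 c1_le] := nat_pos_lower_bound u B.+1.
have [c2 c2_gt0 c2_le] := nat_pos_lower_bound (fun r => u r / L ^+ r) B.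
have LB_gt0 : 0 < L ^+ B by exact: exprn_gt0.
pose c := Num.min (c0 * c1 / L ^+ B) c2.
have c_le1 : c <= c0 * c1 / L ^+ B by rewrite ge_min lexx.
have c_le2 : c <= c2 by rewrite ge_min lexx orbT.
exists c; first by rewrite lt_min !divr_gt0 ?mulr_gt0.
move=> m um; have [mB|Bm] := ltnP m B.
  have := c2_le m mB; rewrite divr_gt0 ?exprn_gt0 // => /(_ isT) c2m.
  apply: le_trans (_ : c2 * L ^+ m <= _).
    by apply: ler_wpM2r => //; exact/exprn_ge0/ltW.
  by rewrite -ler_pdivlMr ?exprn_gt0.
have [x [xm ux_big umx mx_le_B]] := split_large m um Bm.
have c1_le_umx : c1 <= u (m - x)%N by exact: c1_le.
apply: le_trans (_ : u x * u (m - x)%N <= _); last by rewrite -{2}(subnKC xm).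
apply: le_trans (_ : c0 * L ^+ (m - B) * c1 <= _); last first.
  by apply: ler_pM => //; [rewrite mulr_ge0 ?exprn_ge0 ?ltW | exact: ltW].
have -> : L ^+ m = L ^+ (m - B) * L ^+ B by rewrite -exprD subnK.
apply: le_trans (_ : c0 * c1 / L ^+ B * (L ^+ (m - B) * L ^+ B) <= _).
  by apply: ler_wpM2r => //; rewrite mulr_ge0 ?exprn_ge0 ?ltW.
have -> : c0 * c1 / L ^+ B * (L ^+ (m - B) * L ^+ B) = c0 * L ^+ (m - B) * c1.
  by field; rewrite gt_eqF.
exact: lexx.
Qed.

End SupermultiplicativeLowerBound.

Section FirstPassage.
Variables (R : realType) (d : nat).
Local Notation ev l := (delta_mx l 0 : 'cV[R]_d).

Lemma mulmx_delta_col (X : 'M[R]_d) (l a : 'I_d) : (X *m ev l) a 0 = X a l.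
Proof. by rewrite -colE mxE. Qed.

(* For a projection P killing coordinate l, walks into l are split according
   to the step b at which they first enter l. *)
Lemma mxprod_first_passage (l : 'I_d) (P : 'M[R]_d) (bs : seq 'M[R]_d) :
  (forall c : 'cV[R]_d, c = c l 0 *: ev l + P *m c) ->
  P *m P = P -> P *m ev l = 0 ->
  P *m (mxprod bs *m ev l) =
  \sum_(b < size bs) (mxprod (drop b.+1 bs)) l l *:
     (mxprod (map (fun B => P *m B *m P) (take b bs)) *m (P *m bs`_b *m ev l)).
Proof.
move=> decompose PP Pl; elim: bs => [|B bs IH].
  by rewrite big_ord0 /mxprod /= mul1mx Pl.
rewrite /= big_ord_recl /= drop0 mul1mx -mulmxA.
set c := mxprod bs *m ev l.
rewrite [in LHS](decompose c) !mulmxDr mulmx_delta_col !scalemxAr mulmxA.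
congr (_ + _).
have -> : P *m (B *m (P *m c)) = (P *m B *m P) *m (P *m c).
  by rewrite -!mulmxA [P *m (P *m c)]mulmxA PP.
rewrite IH mulmx_sumr; apply: eq_bigr => b _ /=.
by rewrite /bump /= add0n add1n -scalemxAr !mulmxA.
Qed.

End FirstPassage.

Section RestrictedProducts.
Variables (R : realType) (d : nat) (Sigma : seq 'M[R]_d).
Hypothesis Sigma_neq0 : Sigma != [::].
Hypothesis Sigma_ge0 : forall A, A \in Sigma -> nonneg_mx A.
Local Notation E := (sigma_entry Sigma).
Local Notation ev l := (delta_mx l 0 : 'cV[R]_d).
Implicit Types (V : {set 'I_d}) (ws : seq 'M[R]_d).

Definition restrict_mx V (A : 'M[R]_d) : 'M[R]_d :=
  \matrix_(j, k) (if (j \in V) && (k \in V) then A j k else 0).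

Definition restricted_prod V ws := mxprod (map (restrict_mx V) ws).

Definition coord_proj V : 'M[R]_d := diag_mx (\row_a (a \in V)%:R).

Lemma coord_projE V m (X : 'M[R]_(d, m)) a b :
  (coord_proj V *m X) a b = (a \in V)%:R * X a b.
Proof. by rewrite mul_diag_mx !mxE. Qed.

Lemma coord_proj_decompose l (c : 'cV[R]_d) :
  c = c l 0 *: ev l + coord_proj [set~ l] *m c.
Proof.
apply/matrixP => a b; rewrite [RHS]mxE coord_projE !mxE (ord1 b) eqxx andbT !inE.
by case: (eqVneq a l) => [->|_] /=; rewrite ?mulr1 ?mul0r ?addr0 ?mulr0 ?mul1r ?add0r.
Qed.

Lemma coord_proj_idem V : coord_proj V *m coord_proj V = coord_proj V.
Proof.
apply/matrixP => a b; rewrite coord_projE /coord_proj !mxE.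
by case: (a \in V); rewrite ?mul1r ?mul0r // mul0rn.
Qed.

Lemma coord_proj_delta l : coord_proj [set~ l] *m ev l = 0.
Proof.
apply/matrixP => a b; rewrite coord_projE !mxE !inE.
by case: (eqVneq a l) => [_|al]; rewrite ?mul0r // mulr0.
Qed.

Lemma coord_proj_restrict l V A :
  coord_proj [set~ l] *m restrict_mx V A *m coord_proj [set~ l] =
  restrict_mx (V :\ l) A.
Proof.
apply/matrixP => a b; rewrite /coord_proj mul_mx_diag mxE -/(coord_proj _) coord_projE.
rewrite !mxE !in_setD1 !inE.
case: (eqVneq a l) => [_|al]; first by rewrite !mul0r.
case: (eqVneq b l) => [_|bl]; first by rewrite mulr0 andbF.
by rewrite mul1r mulr1.
Qed.

Lemma restrict_mx_ge0 V A : A \in Sigma -> nonneg_mx (restrict_mx V A).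
Proof. by move=> AS j k; rewrite mxE; case: ifP => // _; exact: Sigma_ge0. Qed.

Lemma restrict_mx_le V A j k : A \in Sigma -> restrict_mx V A j k <= A j k.
Proof. by move=> AS; rewrite mxE; case: ifP => // _; exact: Sigma_ge0. Qed.

Lemma restricted_prod_bounds V ws j k : {subset ws <= Sigma} ->
  0 <= restricted_prod V ws j k <= mxprod ws j k.
Proof.
elim: ws j k => [|A ws IH] j k wsS; first by rewrite /restricted_prod /= lexx mxE ler0n.
have AS : A \in Sigma by apply: wsS; exact: mem_head.
have {}wsS : {subset ws <= Sigma} by move=> B BS; apply: wsS; rewrite inE BS orbT.
rewrite /restricted_prod /= -/(restricted_prod V ws) !mxE; apply/andP; split.
  apply: sumr_ge0 => k' _; apply: mulr_ge0; first exact: restrict_mx_ge0.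
  by case/andP: (IH k' k wsS).
apply: ler_sum => k' _; have /andP [Q_ge0 Q_le] := IH k' k wsS.
by apply: ler_pM; rewrite ?restrict_mx_ge0 ?restrict_mx_le.
Qed.

Lemma restricted_prod_row_notin V A ws j k :
  j \notin V -> restricted_prod V (A :: ws) j k = 0.
Proof.
move=> jV; rewrite /restricted_prod /= mxE big1 // => k' _.
by rewrite mxE (negbTE jV) mul0r.
Qed.

Variables (L t : R).
Hypotheses (L_ge0 : 0 <= L) (L_lt_t : L < t).
Hypothesis diag_le : forall n j, E n j j <= L ^+ n.

Let t_gt0 : 0 < t. Proof. exact: le_lt_trans L_lt_t. Qed.

(* For |V| <= k.+1, diagonal entries are at most t ^+ n (the 1), and the
   off-diagonal first-passage terms sum to a geometric series in t. *)
Fixpoint skeleton_const k : R :=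
  if k is k'.+1 then 1 + d%:R * skeleton_const k' * entry_bound Sigma / (t - L) else 1.

Lemma skeleton_const_ge1 k : 1 <= skeleton_const k.
Proof.
elim: k => [|k IH] //=; rewrite lerDl; apply: divr_ge0; last by rewrite subr_ge0 ltW.
by rewrite !mulr_ge0 ?ler0n ?(le_trans ler01 IH) ?entry_bound_ge0.
Qed.

Lemma first_passage_term_le V l ws b j C :
  {subset ws <= Sigma} -> (b < size ws)%N -> 0 <= C ->
  (l \in V -> forall k, restricted_prod (V :\ l) (take b ws) j k <= C) ->
  restricted_prod V (drop b.+1 ws) l l *
    (restricted_prod (V :\ l) (take b ws) *m
      (coord_proj [set~ l] *m restrict_mx V ws`_b *m ev l)) j 0
  <= L ^+ ((size ws).-1 - b) * (d%:R * C * entry_bound Sigma).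
Proof.
move=> wsS b_lt C_ge0 Q_le.
have takeS : {subset take b ws <= Sigma} by move=> A /mem_take /wsS.
have dropS : {subset drop b.+1 ws <= Sigma} by move=> A /mem_drop /wsS.
have AS : ws`_b \in Sigma by apply/wsS/mem_nth.
have Q_ge0 k : 0 <= restricted_prod (V :\ l) (take b ws) j k.
  by case/andP: (restricted_prod_bounds (V :\ l) j k takeS).
set Y := coord_proj [set~ l] *m restrict_mx V ws`_b *m ev l.
have Y_ge0 k : 0 <= Y k 0.
  by rewrite mulmx_delta_col coord_projE mulr_ge0 ?ler0n ?restrict_mx_ge0.
have Y_le k : Y k 0 <= entry_bound Sigma.
  rewrite mulmx_delta_col coord_projE.
  apply: le_trans (_ : ws`_b k l <= _); last first.
    apply: le_trans (rowsum_le_entry_bound Sigma_ge0 k AS).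
    by rewrite (bigD1 l) //= lerDl sumr_ge0 // => k' _; exact: Sigma_ge0.
  apply: le_trans (restrict_mx_le V k l AS).
  by rewrite !inE; case: (k != l); rewrite ?mul1r ?lexx ?mul0r //; exact: restrict_mx_ge0.
apply: ler_pM.
- by case/andP: (restricted_prod_bounds V l l dropS).
- by rewrite mxE sumr_ge0 // => k _; rewrite mulr_ge0.
- apply: le_trans (_ : mxprod (drop b.+1 ws) l l <= _).
    by case/andP: (restricted_prod_bounds V l l dropS).
  apply: le_trans (mxprod_le_sigma_entry Sigma_neq0 l l dropS) _.
  by rewrite size_drop -subn1 -subnDA add1n; exact: diag_le.
rewrite mxE -mulrA mulr_natl -[d in _ *+ d]card_ord -sumr_const.
apply: ler_sum => k _; have [lV|lV] := boolP (l \in V).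
  by apply: ler_pM; rewrite ?Q_le.
have -> : Y k 0 = 0 by rewrite mulmx_delta_col coord_projE mxE (negbTE lV) andbF mulr0.
by rewrite mulr0 mulr_ge0 ?entry_bound_ge0.
Qed.

Lemma restricted_prod_diag_le V ws j : {subset ws <= Sigma} ->
  restricted_prod V ws j j <= t ^+ size ws.
Proof.
move=> wsS; apply: le_trans (_ : mxprod ws j j <= _).
  by case/andP: (restricted_prod_bounds V j j wsS).
apply: le_trans (mxprod_le_sigma_entry Sigma_neq0 j j wsS) _.
apply: le_trans (diag_le _ _) _.
by apply: lerXn2r; rewrite ?nnegrE ?(ltW L_lt_t) ?(ltW t_gt0).
Qed.

Lemma restricted_prod_le k V ws j l : (#|V| <= k)%N -> {subset ws <= Sigma} ->
  restricted_prod V ws j l <= skeleton_const k * t ^+ size ws.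
Proof.
have t_pow_ge0 n : 0 <= t ^+ n by rewrite exprn_ge0 ?ltW.
elim: k => [|k IH] in V ws j l *.
  rewrite leqn0 => /eqP/cards0_eq -> _ /=; case: ws => [|A ws].
    by rewrite /restricted_prod /= mxE expr0 mulr1 lern1 leq_b1.
  by rewrite restricted_prod_row_notin ?inE // mul1r.
move=> V_le wsS; have C_ge0 := le_trans ler01 (skeleton_const_ge1 k).
have [<-|jl] := eqVneq j l.
  apply: le_trans (restricted_prod_diag_le V j wsS) _.
  by rewrite ler_peMl ?skeleton_const_ge1.
have -> : restricted_prod V ws j l =
    (coord_proj [set~ l] *m (restricted_prod V ws *m ev l)) j 0.
  by rewrite coord_projE mulmx_delta_col !inE jl mul1r.
rewrite /restricted_prod (mxprod_first_passage _ (coord_proj_decompose l)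
  (coord_proj_idem _) (coord_proj_delta l)) size_map summxE.
set n := size ws; pose G := d%:R * skeleton_const k * entry_bound Sigma.
have G_ge0 : 0 <= G by rewrite !mulr_ge0 ?ler0n ?entry_bound_ge0.
apply: le_trans (_ : \sum_(b < n) L ^+ (n.-1 - b) * (G * t ^+ b) <= _).
  apply: ler_sum => b _; rewrite mxE -map_drop -map_take -map_comp (nth_map 0) //.
  rewrite (eq_map (coord_proj_restrict l V)) -!/(restricted_prod _ _).
  have -> : G * t ^+ b = d%:R * (skeleton_const k * t ^+ b) * entry_bound Sigma.
    by rewrite /G; ring.
  apply: first_passage_term_le => //; first by rewrite mulr_ge0.
  move=> lV k'; rewrite -[in leRHS](size_takel (ltnW (ltn_ord b))).
  apply: IH; first by rewrite (cardsD1 l V) lV in V_le.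
  by move=> A /mem_take /wsS.
apply: le_trans (_ : G * (t ^+ n / (t - L)) <= _).
  under eq_bigr do rewrite mulrCA.
  by rewrite -mulr_sumr; apply: ler_wpM2l => //; rewrite sum_geometric_le ?L_ge0.
by rewrite /= mulrA mulrAC -/G mulrDl mul1r lerDr.
Qed.

Lemma restrict_mxT A : restrict_mx [set: 'I_d] A = A.
Proof. by apply/matrixP => j k; rewrite mxE !inE. Qed.

Lemma sigma_entry_le_geometric n j l : E n j l <= skeleton_const d * t ^+ n.
Proof.
have [ws [wsS <- ->]] := sigma_entry_attained Sigma_neq0 Sigma_ge0 n j l.
have <- : restricted_prod [set: 'I_d] ws = mxprod ws.
  by rewrite /restricted_prod (eq_map restrict_mxT) map_id.
by apply: restricted_prod_le; rewrite ?cardsT ?card_ord.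
Qed.

End RestrictedProducts.

Section RootSqueeze.
Import numFieldNormedType.Exports.
Local Open Scope classical_set_scope.
Variable R : realType.

Lemma powR_invSn_cvg1 (c : R) : 0 < c -> c `^ n.+1%:R^-1 @[n --> \oo] --> (1 : R).
Proof.
move=> c_gt0.
have -> : (fun n : nat => c `^ n.+1%:R^-1) = expR \o (fun n => harmonic n * ln c).
  by apply: funext => n /=; rewrite /powR gt_eqF.
apply: (@cvg_comp _ _ _ _ expR _ (nbhs (0 : R))).
  by rewrite -(mul0r (ln c)); exact: cvgM cvg_harmonic (cvg_cst _).
by rewrite -expR0; exact: continuous_expR.
Qed.

Lemma cvg_root_squeeze (N : nat -> R) (L C : R) : 0 <= L -> 0 < C ->
  (forall n, (0 < n)%N -> L ^+ n <= C * N n) ->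
  (forall t, L < t -> exists2 D, 0 < D & forall n, N n <= D * t ^+ n) ->
  N n.+1 `^ n.+1%:R^-1 @[n --> \oo] --> L.
Proof.
move=> L_ge0 C_gt0 lower upper; apply/cvgrPdist_lt => e e_gt0.
have e2_gt0 : 0 < e / 2 by rewrite divr_gt0.
set t := L + e / 2.
have [D D_gt0 N_le] : exists2 D, 0 < D & forall n, N n <= D * t ^+ n.
  by apply: upper; rewrite ltrDl.
have D_cvg := cvgr_dist_lt _ _ (cvgM (powR_invSn_cvg1 D_gt0) (cvg_cst t)) _ e2_gt0.
have Cinv_gt0 : 0 < C^-1 by rewrite invr_gt0.
have C_cvg := cvgr_dist_lt _ _ (cvgM (powR_invSn_cvg1 Cinv_gt0) (cvg_cst L)) _ e_gt0.
near=> n.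
have : `|1 * t - D `^ n.+1%:R^-1 * t| < e / 2 by near: n; exact: D_cvg.
have : `|1 * L - C^-1 `^ n.+1%:R^-1 * L| < e by near: n; exact: C_cvg.
rewrite !mul1r !ltr_distlC => /andP [lo _] /andP [_ up].
have r_ge0 : 0 <= n.+1%:R^-1 :> R by rewrite invr_ge0.
have N_ge0 : 0 <= N n.+1.
  rewrite -(pmulr_rge0 _ C_gt0); apply: le_trans (lower n.+1 isT).
  exact: exprn_ge0.
apply/andP; split.
  apply: (lt_le_trans lo).
  have Cinv_ge0 := ltW Cinv_gt0; have Ln_ge0 := exprn_ge0 n.+1 L_ge0.
  rewrite -[X in _ * X <= _](@powR_invn_expr _ L n.+1) // -powRM //.
  apply: ler_powR_nneg; rewrite ?mulr_ge0 // ler_pdivrMl //.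
  exact: lower.
apply: le_lt_trans (_ : D `^ n.+1%:R^-1 * t < _); last first.
  by apply: (lt_le_trans up); rewrite /t -addrA -splitr.
have t_ge0 : 0 <= t by rewrite addr_ge0 // ltW.
rewrite -[X in _ <= _ * X](@powR_invn_expr _ t n.+1) //.
rewrite -powRM ?exprn_ge0 // ?(ltW D_gt0) //.
exact: ler_powR_nneg.
Unshelve. all: end_near.
Qed.

End RootSqueeze.

Section JointSpectralRadius.
Import numFieldNormedType.Exports.
Variables (R : realType) (d : nat) (Sigma : seq 'M[R]_d).
Hypothesis Sigma_neq0 : Sigma != [::].
Hypothesis Sigma_ge0 : forall A, A \in Sigma -> nonneg_mx A.
Local Notation E := (sigma_entry Sigma).
Local Notation N := (sigma_norm Sigma).

Definition max_diag_rate := \big[Num.max/0]_(i < d) diag_rate Sigma i.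

Lemma max_diag_rate_ge0 : 0 <= max_diag_rate.
Proof. exact: bigmax_ge_id. Qed.

Lemma diag_rate_le_max i : diag_rate Sigma i <= max_diag_rate.
Proof. exact: (le_bigmax _ (diag_rate Sigma)). Qed.

Lemma max_diag_rate_attained :
  0 < max_diag_rate -> exists i, diag_rate Sigma i = max_diag_rate.
Proof.
rewrite /max_diag_rate; case: (pickP (fun i : 'I_d => true)) => [i0 _|no_index].
  have [i _ ->] := @eq_bigmax _ _ _ 0 i0 xpredT (diag_rate Sigma) isT
    (fun i _ => diag_rate_ge0 Sigma_neq0 Sigma_ge0 i).
  by exists i.
by rewrite big_pred0 ?ltxx.
Qed.

Lemma sigma_norm_ge0 n : 0 <= N n.
Proof. exact: bigmax_ge_id. Qed.

Lemma sigma_entry_le_sigma_norm n j l : E n j l <= N n.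
Proof.
apply: bigmax_le => [|t _]; first exact: sigma_norm_ge0.
apply: le_trans (le_bigmax _ (fun t => mx_maxnorm (word_prod t)) t).
apply: (bigmax_sup j) => //; apply: (bigmax_sup l) => //; exact: ler_norm.
Qed.

Lemma sigma_norm_le n X : 0 <= X -> (forall j l, E n j l <= X) -> N n <= X.
Proof.
move=> X_ge0 E_le; apply: bigmax_le => // t _; apply: bigmax_le => // j _.
apply: bigmax_le => // l _; rewrite ger0_norm ?word_prod_ge0 //.
exact: le_trans (word_prod_le_sigma_entry t j l) (E_le j l).
Qed.

(* The factor d.+1 rather than d keeps the constant positive when d = 0. *)
Lemma max_diag_rate_expr_le n : (0 < n)%N -> max_diag_rate ^+ n <= d.+1%:R * N n.
Proof.
move=> n_gt0; have dN_ge0 := mulr_ge0 (ler0n _ d.+1) (sigma_norm_ge0 n).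
have [rate0|rate_neq0] := eqVneq max_diag_rate 0; first by rewrite rate0 expr0n gtn_eqF.
have [i <-] : exists i, diag_rate Sigma i = max_diag_rate.
  by apply: max_diag_rate_attained; rewrite lt_def rate_neq0 max_diag_rate_ge0.
apply: le_trans (diag_rate_expr_le Sigma_neq0 Sigma_ge0 i n) _.
apply: le_trans (_ : d%:R * N n <= _); last by rewrite ler_wpM2r ?sigma_norm_ge0 ?ler_nat.
apply: ler_wpM2l => //; apply: bigmax_le => [|p _]; first exact: sigma_norm_ge0.
exact: sigma_entry_le_sigma_norm.
Qed.

Lemma sigma_norm_le_geometric (t : R) : max_diag_rate < t ->
  exists2 D, 0 < D & forall n, N n <= D * t ^+ n.
Proof.
move=> rate_lt_t.
have diag_le n j : E n j j <= max_diag_rate ^+ n.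
  apply: le_trans (sigma_entry_diag_le Sigma_neq0 Sigma_ge0 j n) _.
  by apply: lerXn2r; rewrite ?nnegrE ?diag_rate_ge0 ?max_diag_rate_ge0 ?diag_rate_le_max.
have D_ge1 := skeleton_const_ge1 Sigma_ge0 rate_lt_t d.
exists (skeleton_const Sigma max_diag_rate t d); first exact: lt_le_trans ltr01 D_ge1.
move=> n; apply: sigma_norm_le => [|j l].
  have t_gt0 : 0 < t := le_lt_trans max_diag_rate_ge0 rate_lt_t.
  by rewrite mulr_ge0 ?exprn_ge0 ?(le_trans ler01 D_ge1) ?ltW.
have := sigma_entry_le_geometric Sigma_neq0 Sigma_ge0 max_diag_rate_ge0 rate_lt_t.
by move/(_ diag_le n j l).
Qed.

Lemma jsr_max_diag_rate : jsr Sigma = max_diag_rate.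
Proof.
rewrite /jsr; apply: cvg_lim => //; apply: (@cvg_root_squeeze _ _ _ d.+1%:R).
- exact: max_diag_rate_ge0.
- by rewrite ltr0n.
- exact: max_diag_rate_expr_le.
- exact: sigma_norm_le_geometric.
Qed.

Lemma root_entries_le_max_diag_rate (m : 'I_d -> nat) : (forall i, 0 < m i)%N ->
  \big[Num.max/0]_(i < d) (E (m i) i i `^ (m i)%:R^-1) <= max_diag_rate.
Proof.
move=> m_gt0; apply: bigmax_le => [|i _]; first exact: max_diag_rate_ge0.
apply: le_trans (diag_rate_le_max i); exact: diag_rate_ub.
Qed.

Lemma diag_rate_le_root_entry i : 0 < diag_rate Sigma i -> exists2 K, 0 < K &
  forall n, (0 < n)%N -> 0 < E n i i -> diag_rate Sigma i <= (K * E n i i) `^ n%:R^-1.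
Proof.
move=> rate_gt0; have rate_ge0 := ltW rate_gt0.
have [T [c0 c0_gt0 recurrent]] := diag_rate_recurrent Sigma_neq0 Sigma_ge0 i.
have E0 : E 0 i i = 1 by rewrite sigma_entry0 // eqxx.
have [c c_gt0 c_le] := supermul_lower_bound rate_gt0 c0_gt0 E0
  (fun a b => sigma_entry_mul Sigma_neq0 Sigma_ge0 a b i i i) recurrent.
exists c^-1; first by rewrite invr_gt0.
move=> n n_gt0 En_gt0; rewrite -(@powR_invn_expr _ (diag_rate Sigma i) n) //.
apply: ler_powR_nneg; rewrite ?invr_ge0 ?exprn_ge0 //.
by rewrite ler_pdivlMl // c_le.
Qed.

End JointSpectralRadius.

Theorem theorem2 (R : realType) (d : nat) (Sigma : seq 'M[R]_d) :
  Sigma != [::] ->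
  (forall A, A \in Sigma -> nonneg_mx A) ->
  exists K : R, 0 < K /\
    forall m : 'I_d -> nat,
      (forall i, (0 < m i)%N /\
         (sigma_entry Sigma (m i) i i != 0 \/
          ((forall n, (0 < n)%N -> sigma_entry Sigma n i i = 0) /\ m i = 1%N))) ->
      \big[Num.max/0]_(i < d) (sigma_entry Sigma (m i) i i `^ ((m i)%:R)^-1)
        <= jsr Sigma /\
      jsr Sigma <=
        \big[Num.max/0]_(i < d) ((K * sigma_entry Sigma (m i) i i) `^ ((m i)%:R)^-1).
Proof.
move=> Sigma_neq0 Sigma_ge0; rewrite jsr_max_diag_rate //.
have lower := root_entries_le_max_diag_rate Sigma_neq0 Sigma_ge0.
have [rho0|rho_neq0] := eqVneq (max_diag_rate Sigma) 0.
  exists 1; split => // m m_spec; split; first by apply: lower => i; case: (m_spec i).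
  by rewrite rho0; exact: bigmax_ge_id.
have [i0 i0_max] : exists i, diag_rate Sigma i = max_diag_rate Sigma.
  by apply: max_diag_rate_attained; rewrite // lt_def rho_neq0 max_diag_rate_ge0.
have i0_gt0 : 0 < diag_rate Sigma i0.
  by rewrite i0_max lt_def rho_neq0 max_diag_rate_ge0.
have [K K_gt0 K_le] := diag_rate_le_root_entry Sigma_neq0 Sigma_ge0 i0_gt0.
exists K; split => // m m_spec; split; first by apply: lower => i; case: (m_spec i).
apply: (bigmax_sup i0) => //; rewrite -i0_max; have [m_gt0 entry] := m_spec i0.
apply: K_le => //; rewrite lt_def sigma_entry_ge0 // andbT.
case: entry => // -[all0 _].
by have [n /all0 ->] := diag_rate_gt0_entry_neq0 i0_gt0; rewrite eqxx.
Qed.
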